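(* Let $\mathcal{M}=(l;\mathcal{V})$ and $\mathcal{M}'=(l';\mathcal{V})$ be semi-parametric models over $\Omega$ with $\mathcal{M}\sim\mathcal{M}'$, and for $\gamma>0$ consider the families $\mathcal{M}(\gamma)=(\gamma l;\mathcal{V})$ and $\mathcal{M}'(\gamma)=(\gamma l';\mathcal{V})$. Then for any data $\mathbf{y}$ (observed at measurement locations $\mathcal{X}$) and noise variance $\sigma^2$, the values of the leave-one-out squared-error criterion, the leave-one-out negative log-likelihood criterion and the SURE criterion are the same for $\mathcal{M}(\gamma)$ and $\mathcal{M}'(\gamma)$, for every $\gamma$. Consequently, if $\gamma^\star$ is an optimal value of the criterion for the family $\mathcal{M}(\gamma)$, it is an optimal value for $\mathcal{M}'(\gamma)$, and the selected models $\mathcal{M}(\gamma^\star)$ and $\mathcal{M}'(\gamma^\star)$ are prediction-equivalent.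
   Context: SPM: a pair $(l;\mathcal{V})$, $\mathcal{V}=\{v_1,\ldots,v_m\}$ linearly independent functions on $\Omega$, $l$ symmetric and conditionally positive semi-definite w.r.t. $\mathcal{V}$ (for every finite $\mathcal{X}$ unisolvent for $\mathcal{V}$, i.e. with basis matrix $\mathbf{V}=[v_j(x_i)]$ of full column rank, $\widetilde{\mathbf{L}}=(\mathbf{I}-\mathbf{Q}\mathbf{Q}^\top)\mathbf{L}(\mathbf{I}-\mathbf{Q}\mathbf{Q}^\top)\succeq0$ where $\mathbf{Q}$ is an orthonormal basis of $\mathrm{span}\,\mathbf{V}$ and $\mathbf{L}=[l(x_i,x_j)]$). Predictive mean and variance at $x$ given observations $\mathbf{y}$ at unisolvent $\mathcal{X}$ with noise variance $\sigma^2$: $\mathbb{E}(f(x)\mid\mathbf{y})=(\mathbf{l}_{x,\mathcal{X}}\ \mathbf{v}_x)\mathbf{S}^{-1}\binom{\mathbf{y}}{\mathbf{0}}$, $\mathrm{Var}(f(x)\mid\mathbf{y})=l(x,x)-(\mathbf{l}_{x,\mathcal{X}}\ \mathbf{v}_x)\mathbf{S}^{-1}\binom{\mathbf{l}_{x,\mathcal{X}}^\top}{\mathbf{v}_x^\top}$, $\mathbf{S}=\begin{pmatrix}\mathbf{L}+\sigma^2\mathbf{I}&\mathbf{V}\\ \mathbf{V}^\top&\mathbf{0}\end{pmatrix}$. Smoother matrix: $\mathbf{M}=\mathbf{Q}\mathbf{Q}^\top+\widetilde{\mathbf{L}}(\widetilde{\mathbf{L}}+\sigma^2\mathbf{I})^{-1}$.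 $\mathcal{M}\sim\mathcal{M}'$ means $|\mathcal{V}|=|\mathcal{V}'|$ and equal predictive means and variances for every finite unisolvent $\mathcal{X}$, all $x,\mathbf{y},\sigma^2>0$. Selection criteria (for $n$ observations $y_i$ at $x_i$, with $\mathbf{y}_{-i}$ the data without the $i$-th observation): LOO squared error $C_{\mathrm{loo\text{-}mse}}=\frac1n\sum_i\big(y_i-\mathbb{E}(f(x_i)\mid\mathbf{y}_{-i})\big)^2$; LOO negative log-likelihood $C_{\mathrm{loo\text{-}nll}}=\frac1n\sum_i\big\{\frac12\log(2\pi\,\mathrm{Var}(y_i\mid\mathbf{y}_{-i}))+\frac{(y_i-\mathbb{E}(y_i\mid\mathbf{y}_{-i}))^2}{2\mathrm{Var}(y_i\mid\mathbf{y}_{-i})}\big\}$, where $y_i\mid\mathbf{y}_{-i}$ is Gaussian with mean $\mathbb{E}(f(x_i)\mid\mathbf{y}_{-i})$ and variance $\mathrm{Var}(f(x_i)\mid\mathbf{y}_{-i})+\sigma^2$; SURE $C_{\mathrm{SURE}}=-\sigma^2+\frac1n\sum_i(y_i-(\mathbf{M}\mathbf{y})_i)^2+\frac{2\sigma^2}{n}\mathrm{Tr}\,\mathbf{M}$. *)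

From HB Require Import structures.
From mathcomp Require Import all_boot all_order all_algebra.
From mathcomp Require Import reals exp trigo.
Set Implicit Arguments. Unset Strict Implicit. Unset Printing Implicit Defensive.
Import Order.TTheory GRing.Theory Num.Theory.
Local Open Scope ring_scope.

Section SPM.
Variables (R : realType) (Omega : Type) (m : nat).
Variable v : 'I_m -> Omega -> R.

Definition lin_indep : Prop :=
  forall c : 'I_m -> R, (forall x, \sum_(j < m) c j * v j x = 0) -> forall j, c j = 0.

Definition basis_mx n (xs : 'I_n -> Omega) : 'M[R]_(n, m) :=
  \matrix_(i, j) v j (xs i).

Definition unisolvent n (xs : 'I_n -> Omega) : Prop :=
  \rank (basis_mx xs) = m.

(* Q Q^T, the orthogonal projector onto span V (independent of the choice of
   the orthonormal basis Q; written out as V (V^T V)^{-1} V^T) *)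
Definition projV n (xs : 'I_n -> Omega) : 'M[R]_n :=
  basis_mx xs *m invmx ((basis_mx xs)^T *m basis_mx xs) *m (basis_mx xs)^T.

Definition kern_mx (l : Omega -> Omega -> R) n (xs : 'I_n -> Omega) : 'M[R]_n :=
  \matrix_(i, j) l (xs i) (xs j).

Definition Ltilde (l : Omega -> Omega -> R) n (xs : 'I_n -> Omega) : 'M[R]_n :=
  (1%:M - projV xs) *m kern_mx l xs *m (1%:M - projV xs).

Definition psd n (A : 'M[R]_n) : Prop :=
  forall u : 'cV[R]_n, 0 <= (u^T *m A *m u) 0 0.

Definition cond_psd (l : Omega -> Omega -> R) : Prop :=
  forall n (xs : 'I_n -> Omega), injective xs -> unisolvent xs -> psd (Ltilde l xs).

Definition SPM (l : Omega -> Omega -> R) : Prop :=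
  lin_indep /\ (forall x y, l x y = l y x) /\ cond_psd l.

Definition Smx (l : Omega -> Omega -> R) n (xs : 'I_n -> Omega) (s2 : R)
  : 'M[R]_(n + m) :=
  block_mx (kern_mx l xs + s2%:M) (basis_mx xs) (basis_mx xs)^T 0.

Definition kvec (l : Omega -> Omega -> R) n (xs : 'I_n -> Omega) (x : Omega)
  : 'rV[R]_(n + m) :=
  row_mx (\row_i l x (xs i)) (\row_j v j x).

Definition pmean (l : Omega -> Omega -> R) n (xs : 'I_n -> Omega) (s2 : R)
  (y : 'cV[R]_n) (x : Omega) : R :=
  (kvec l xs x *m invmx (Smx l xs s2) *m col_mx y 0) 0 0.

Definition pvar (l : Omega -> Omega -> R) n (xs : 'I_n -> Omega) (s2 : R)
  (x : Omega) : R :=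
  l x x - (kvec l xs x *m invmx (Smx l xs s2) *m (kvec l xs x)^T) 0 0.

(* M ~ M' (both with the same V, hence |V| = |V'|) *)
Definition pred_equiv (l l' : Omega -> Omega -> R) : Prop :=
  forall n (xs : 'I_n -> Omega), injective xs -> unisolvent xs ->
  forall (x : Omega) (y : 'cV[R]_n) (s2 : R), 0 < s2 ->
    pmean l xs s2 y x = pmean l' xs s2 y x /\ pvar l xs s2 x = pvar l' xs s2 x.

Definition kscale (g : R) (l : Omega -> Omega -> R) : Omega -> Omega -> R :=
  fun x x' => g * l x x'.

(* leave-one-out: the points / data without the i-th observation *)
Definition rem_idx n (i : 'I_n) (j : 'I_n.-1) : 'I_n := insubd i (bump i j).
Definition rem_pts n (xs : 'I_n -> Omega) (i : 'I_n) : 'I_n.-1 -> Omega :=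
  fun j => xs (rem_idx i j).
Definition rem_obs n (y : 'cV[R]_n) (i : 'I_n) : 'cV[R]_n.-1 :=
  \col_j y (rem_idx i j) 0.

Definition loo_mean (l : Omega -> Omega -> R) n (xs : 'I_n -> Omega) (s2 : R)
  (y : 'cV[R]_n) (i : 'I_n) : R :=
  pmean l (rem_pts xs i) s2 (rem_obs y i) (xs i).

(* Var(y_i | y_{-i}) = Var(f(x_i) | y_{-i}) + sigma^2 *)
Definition loo_var (l : Omega -> Omega -> R) n (xs : 'I_n -> Omega) (s2 : R)
  (i : 'I_n) : R :=
  pvar l (rem_pts xs i) s2 (xs i) + s2.

Definition C_loo_mse (l : Omega -> Omega -> R) n (xs : 'I_n -> Omega) (s2 : R)
  (y : 'cV[R]_n) : R :=
  n%:R^-1 * \sum_(i < n) (y i 0 - loo_mean l xs s2 y i) ^+ 2.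

Definition C_loo_nll (l : Omega -> Omega -> R) n (xs : 'I_n -> Omega) (s2 : R)
  (y : 'cV[R]_n) : R :=
  n%:R^-1 * \sum_(i < n)
    (2^-1 * ln (2 * pi * loo_var l xs s2 i)
     + (y i 0 - loo_mean l xs s2 y i) ^+ 2 / (2 * loo_var l xs s2 i)).

Definition smoother (l : Omega -> Omega -> R) n (xs : 'I_n -> Omega) (s2 : R)
  : 'M[R]_n :=
  projV xs + Ltilde l xs *m invmx (Ltilde l xs + s2%:M).

Definition C_SURE (l : Omega -> Omega -> R) n (xs : 'I_n -> Omega) (s2 : R)
  (y : 'cV[R]_n) : R :=
  - s2 + n%:R^-1 * \sum_(i < n) (y i 0 - (smoother l xs s2 *m y) i 0) ^+ 2
  + 2 * s2 / n%:R * \tr (smoother l xs s2).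

End SPM.

Definition crit_opt (R : realType) (C : R -> R) (g : R) : Prop :=
  0 < g /\ forall g', 0 < g' -> C g <= C g'.

(* Scaling the kernel by [g] at noise [s2] gives the predictive mean of the
   unscaled model at noise [s2 / g] and [g] times its predictive variance, because
   the saddle-point matrix factors through block-diagonal scalings; hence
   prediction equivalence survives scaling.  The SURE criterion only depends on
   the smoother [M], and [M y] is the vector of predictive means at the data
   points: if [(a; b)] solves the saddle-point system for [(y; 0)], both equal
   [y - s2 a].  The leave-one-out criteria only involve predictive means and
   variances for the reduced point sets. *)

From HB Require Import structures.
From mathcomp Require Import all_boot all_order all_algebra.
From mathcomp Require Import reals exp trigo.
Import Order.TTheory GRing.Theory Num.Theory.
Local Open Scope ring_scope.

Set Implicit Arguments.
Unset Strict Implicit.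
Unset Printing Implicit Defensive.

Lemma row_inj_unitmx (F : fieldType) k (A : 'M[F]_k) :
  (forall u : 'rV_k, u *m A = 0 -> u = 0) -> A \in unitmx.
Proof. by move=> Ainj; rewrite -row_free_unit; apply: inj_row_free. Qed.

Lemma mulmx1_invmx (R : comUnitRingType) k (A B : 'M[R]_k) :
  A *m B = 1%:M -> invmx A = B.
Proof.
move=> AB; have [uA _] := mulmx1_unit AB.
by rewrite -(mulKmx uA B) AB mulmx1.
Qed.

Section RealMatrix.
Variable R : realFieldType.

Lemma mulmx_tr_ge0 k (a : 'rV[R]_k) : 0 <= (a *m a^T) 0 0.
Proof. by rewrite mxE; apply: sumr_ge0 => j _; rewrite mxE -expr2 sqr_ge0. Qed.

Lemma mulmx_tr_eq0 k (a : 'rV[R]_k) : (a *m a^T) 0 0 = 0 -> a = 0.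
Proof.
rewrite mxE => sum_sq0; apply/rowP => j; rewrite mxE.
have sq_ge0 (i : 'I_k) : predT i -> 0 <= a 0 i * a^T i 0.
  by rewrite mxE -expr2 sqr_ge0.
have /eqP := psumr_eq0P sq_ge0 sum_sq0 (i := j) isT.
by rewrite mxE -expr2 sqrf_eq0 => /eqP.
Qed.

Lemma quad_shift_eq0 k (A : 'M[R]_k) (a : 'rV[R]_k) t :
  0 <= (a *m A *m a^T) 0 0 -> 0 < t ->
  (a *m (A + t%:M) *m a^T) 0 0 = 0 -> a = 0.
Proof.
move=> qA_ge0 t_gt0; rewrite mulmxDr mulmxDl mul_mx_scalar -scalemxAl => q0.
have {}q0 : (a *m A *m a^T) 0 0 + t * (a *m a^T) 0 0 = 0 by rewrite -q0 !mxE.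
apply: mulmx_tr_eq0; apply/eqP; rewrite eq_le mulmx_tr_ge0 andbT.
by rewrite -(pmulr_rle0 _ t_gt0) -q0 lerDr.
Qed.

Definition diag2_mx p q (a b : R) : 'M[R]_(p + q) := block_mx a%:M 0 0 b%:M.

Lemma diag2_mxM p q a b c d :
  diag2_mx p q a b *m diag2_mx p q c d = diag2_mx p q (a * c) (b * d).
Proof.
by rewrite /diag2_mx mulmx_block !mulmx0 !mul0mx !addr0 !add0r -!scalar_mxM.
Qed.

Lemma diag2_mx_scalar p q a : diag2_mx p q a a = a%:M.
Proof. by rewrite /diag2_mx -scalar_mx_block. Qed.

Lemma tr_diag2_mx p q a b : (diag2_mx p q a b)^T = diag2_mx p q a b.
Proof. by rewrite /diag2_mx tr_block_mx !tr_scalar_mx !trmx0. Qed.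

End RealMatrix.

Section SemiParametric.
Variables (R : realType) (Omega : Type) (m : nat) (v : 'I_m -> Omega -> R).

Section Points.
Variables (n : nat) (xs : 'I_n -> Omega).
Hypothesis xs_unisolvent : unisolvent v xs.

Local Notation V := (basis_mx v xs).
Local Notation P := (projV v xs).

Lemma basis_trmx_inj (b : 'rV[R]_m) : b *m V^T = 0 -> b = 0.
Proof.
have VT_free : row_free V^T by rewrite /row_free mxrank_tr xs_unisolvent.
by move=> bV0; apply: (row_free_inj VT_free); rewrite bV0 mul0mx.
Qed.

Lemma gram_unitmx : V^T *m V \in unitmx.
Proof.
apply: row_inj_unitmx => u uG0; apply: basis_trmx_inj; apply: mulmx_tr_eq0.
by rewrite trmx_mul trmxK !mulmxA -(mulmxA u) uG0 mul0mx mxE.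
Qed.

Lemma projV_basis : P *m V = V.
Proof. by rewrite /projV -!mulmxA mulVmx ?gram_unitmx // mulmx1. Qed.

Lemma projV_idem : P *m P = P.
Proof. by rewrite {1}/projV !mulmxA projV_basis. Qed.

Lemma projV_orth (u : 'cV[R]_n) : V^T *m u = 0 -> P *m u = 0.
Proof. by move=> Vu0; rewrite /projV -mulmxA Vu0 mulmx0. Qed.

Lemma orth_projV (a : 'rV[R]_n) : a *m V = 0 -> a *m P = 0.
Proof. by move=> aV0; rewrite /projV !mulmxA aV0 !mul0mx. Qed.

Lemma Ltilde_projV l : Ltilde v l xs *m P = 0.
Proof.
rewrite /Ltilde -(mulmxA _ (1%:M - P)) (mulmxBl 1%:M P P) mul1mx projV_idem.
by rewrite subrr mulmx0.
Qed.

Lemma Ltilde_quad l (a : 'rV[R]_n) : a *m V = 0 ->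
  a *m Ltilde v l xs *m a^T = a *m kern_mx l xs *m a^T.
Proof.
move=> aV0.
have aP : a *m (1%:M - P) = a by rewrite mulmxBr mulmx1 orth_projV ?subr0.
have Pa : (1%:M - P) *m a^T = a^T.
  by rewrite mulmxBl mul1mx projV_orth ?subr0 // -trmx_mul aV0 trmx0.
by rewrite /Ltilde !mulmxA aP -(mulmxA _ _ a^T) Pa.
Qed.

Lemma Smx_unitmx l s2 : psd (Ltilde v l xs) -> 0 < s2 -> Smx v l xs s2 \in unitmx.
Proof.
move=> Lt_psd s2_gt0; apply: row_inj_unitmx => u.
rewrite -[u](@hsubmxK _ 1 n m); move: (lsubmx u) (rsubmx u) => a b.
rewrite /Smx mul_row_block mulmx0 addr0 -row_mx0 => /eq_row_mx[eq1 aV0].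
have a0 : a = 0.
  apply: (quad_shift_eq0 (A := kern_mx l xs) _ s2_gt0).
    by rewrite -Ltilde_quad //; have := Lt_psd a^T; rewrite trmxK.
  have := congr1 (fun M => (M *m a^T) 0 0) eq1.
  rewrite /= mulmxDl -(mulmxA b) -trmx_mul aV0 trmx0 mulmx0 addr0 mul0mx => ->.
  by rewrite mxE.
by move: eq1; rewrite a0 mul0mx add0r => /basis_trmx_inj->; rewrite row_mx0.
Qed.

Lemma Ltilde_shift_unitmx l s2 :
  psd (Ltilde v l xs) -> 0 < s2 -> Ltilde v l xs + s2%:M \in unitmx.
Proof.
move=> Lt_psd s2_gt0; apply: row_inj_unitmx => u uA0.
apply: (quad_shift_eq0 (A := Ltilde v l xs) _ s2_gt0); last by rewrite uA0 mul0mx mxE.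
by have := Lt_psd u^T; rewrite trmxK.
Qed.

End Points.

Section Scaling.
Variables (g : R) (l : Omega -> Omega -> R) (n : nat) (xs : 'I_n -> Omega).
Hypothesis g_gt0 : 0 < g.

Local Notation D := (@diag2_mx R n m).

Lemma kern_mx_kscale : kern_mx (kscale g l) xs = g *: kern_mx l xs.
Proof. by apply/matrixP => i j; rewrite !mxE. Qed.

Lemma psd_Ltilde_kscale : psd (Ltilde v l xs) -> psd (Ltilde v (kscale g l) xs).
Proof.
move=> Lt_psd u; rewrite /Ltilde kern_mx_kscale -scalemxAr -scalemxAl.
by rewrite -scalemxAr -scalemxAl mxE; apply: mulr_ge0; [exact: ltW | exact: Lt_psd].
Qed.

Lemma kvec_kscale x : kvec v (kscale g l) xs x = kvec v l xs x *m D g 1.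
Proof.
rewrite /kvec /diag2_mx mul_row_block !mulmx0 addr0 add0r mulmx1 mul_mx_scalar.
by congr row_mx; apply/rowP => i; rewrite !mxE.
Qed.

Lemma Smx_kscale s2 :
  Smx v (kscale g l) xs s2 *m D g^-1 1 = D 1 g^-1 *m Smx v l xs (s2 / g).
Proof.
rewrite /Smx /diag2_mx !mulmx_block !mulmx0 !mul0mx !addr0 !add0r !mulmx1 !mul1mx.
rewrite kern_mx_kscale mul_mx_scalar mul_scalar_mx scalerDr scalerA mulVf ?gt_eqF //.
by rewrite scale1r scale_scalar_mx mulrC mul_mx_scalar.
Qed.

Lemma invmx_Smx_kscale s2 : Smx v l xs (s2 / g) \in unitmx ->
  invmx (Smx v (kscale g l) xs s2) =
  D g^-1 1 *m invmx (Smx v l xs (s2 / g)) *m D 1 g.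
Proof.
move=> S_unit; apply: mulmx1_invmx.
rewrite !mulmxA Smx_kscale -(mulmxA (D 1 g^-1)) mulmxV // mulmx1 diag2_mxM.
by rewrite mulr1 mulVf ?gt_eqF // diag2_mx_scalar.
Qed.

Lemma pmean_pvar_kscale s2 y x : Smx v l xs (s2 / g) \in unitmx ->
  pmean v (kscale g l) xs s2 y x = pmean v l xs (s2 / g) y x /\
  pvar v (kscale g l) xs s2 x = g * pvar v l xs (s2 / g) x.
Proof.
move=> S_unit; rewrite /pmean /pvar invmx_Smx_kscale // kvec_kscale.
set k := kvec v l xs x.
have D_inv : D g 1 *m D g^-1 1 = 1%:M.
  by rewrite diag2_mxM mulfV ?gt_eqF // mulr1 diag2_mx_scalar.
have D_obs : D 1 g *m col_mx y 0 = col_mx y 0.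
  by rewrite /diag2_mx mul_block_col !mul0mx mulmx0 !addr0 mul1mx.
have D_kvec : D 1 g *m (k *m D g 1)^T = g *: k^T.
  rewrite trmx_mul tr_diag2_mx mulmxA diag2_mxM mul1r mulr1.
  by rewrite diag2_mx_scalar mul_scalar_mx.
split; first by rewrite -!mulmxA D_obs !mulmxA -(mulmxA k) D_inv mulmx1.
by rewrite -!mulmxA D_kvec !mulmxA -(mulmxA k) D_inv mulmx1 -scalemxAr mxE mulrBr.
Qed.

End Scaling.

Lemma pred_equiv_kscale g l l' : cond_psd v l -> cond_psd v l' ->
  pred_equiv v l l' -> 0 < g -> pred_equiv v (kscale g l) (kscale g l').
Proof.
move=> l_psd l'_psd ll' g_gt0 n xs xs_inj xs_uni x y s2 s2_gt0.
have s2g_gt0 : 0 < s2 / g by rewrite divr_gt0.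
have S_unit k : cond_psd v k -> Smx v k xs (s2 / g) \in unitmx.
  by move=> k_psd; apply: Smx_unitmx => //; apply: k_psd.
have [-> ->] := pmean_pvar_kscale g_gt0 y x (S_unit l l_psd).
have [-> ->] := pmean_pvar_kscale g_gt0 y x (S_unit l' l'_psd).
by have [-> ->] := ll' n xs xs_inj xs_uni x y _ s2g_gt0.
Qed.

Section Smoother.
Variables (l : Omega -> Omega -> R) (n : nat) (xs : 'I_n -> Omega) (s2 : R).
Variable y : 'cV[R]_n.
Hypotheses (Lt_psd : psd (Ltilde v l xs)) (xs_uni : unisolvent v xs).
Hypothesis s2_gt0 : 0 < s2.

Local Notation V := (basis_mx v xs).
Local Notation P := (projV v xs).
Local Notation L := (kern_mx l xs).
Local Notation Lt := (Ltilde v l xs).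

Let z := invmx (Smx v l xs s2) *m col_mx y 0.
Let a := usubmx z.
Let b := dsubmx z.

Lemma saddle_system : (L + s2%:M) *m a + V *m b = y /\ V^T *m a = 0.
Proof.
have : Smx v l xs s2 *m z = col_mx y 0 by rewrite mulKVmx ?Smx_unitmx.
by rewrite -[z]vsubmxK /Smx mul_block_col mul0mx addr0 => /eq_col_mx.
Qed.

Lemma pmean_data : \col_i pmean v l xs s2 y (xs i) = y - s2 *: a.
Proof.
have [sol _] := saddle_system.
have -> : \col_i pmean v l xs s2 y (xs i) = row_mx L V *m z.
  apply/colP => i; rewrite mxE /pmean -mulmxA -/z.
  have -> : kvec v l xs (xs i) = row i (row_mx L V).
    by rewrite row_row_mx; congr row_mx; apply/rowP => j; rewrite !mxE.
  by rewrite -row_mul mxE.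
by rewrite -[z]vsubmxK mul_row_col -sol mulmxDl mul_scalar_mx addrAC addrK.
Qed.

Lemma Ltilde_shift_sol : (Lt + s2%:M) *m a = (1%:M - P) *m y.
Proof.
have [<- Va0] := saddle_system.
have Pa : (1%:M - P) *m a = a by rewrite mulmxBl mul1mx projV_orth ?subr0.
have PV : (1%:M - P) *m V = 0 by rewrite mulmxBl mul1mx projV_basis ?subrr.
rewrite mulmxDr (mulmxA _ V) PV mul0mx addr0 (mulmxDl Lt) (mulmxDl L) mulmxDr.
by rewrite !mul_scalar_mx -scalemxAr Pa /Ltilde -!mulmxA Pa.
Qed.

Lemma invmx_Ltilde_shift : invmx (Lt + s2%:M) *m y = a + s2^-1 *: (P *m y).
Proof.
have AP : (Lt + s2%:M) *m P = s2 *: P.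
  by rewrite mulmxDl Ltilde_projV // mul_scalar_mx add0r.
apply: (canLR (mulKmx (Ltilde_shift_unitmx Lt_psd s2_gt0))).
rewrite mulmxDr Ltilde_shift_sol -scalemxAr mulmxA AP -scalemxAl scalerA mulVf ?gt_eqF //.
by rewrite scale1r mulmxBl mul1mx subrK.
Qed.

Lemma smoother_mulmx : smoother v l xs s2 *m y = y - s2 *: a.
Proof.
rewrite /smoother mulmxDl -mulmxA invmx_Ltilde_shift mulmxDr -scalemxAr mulmxA.
rewrite Ltilde_projV // mul0mx scaler0 addr0.
have -> : Lt *m a = (1%:M - P) *m y - s2 *: a.
  by rewrite -Ltilde_shift_sol mulmxDl mul_scalar_mx addrK.
by rewrite mulmxBl mul1mx addrA [P *m y + _]addrC subrK.
Qed.

Lemma smoother_pmean : smoother v l xs s2 *m y = \col_i pmean v l xs s2 y (xs i).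
Proof. by rewrite smoother_mulmx pmean_data. Qed.

End Smoother.

Section Criteria.
Variables (l l' : Omega -> Omega -> R) (n : nat) (xs : 'I_n -> Omega) (s2 : R).
Hypotheses (ll' : pred_equiv v l l') (xs_inj : injective xs) (s2_gt0 : 0 < s2).

Lemma smoother_pred_equiv : psd (Ltilde v l xs) -> psd (Ltilde v l' xs) ->
  unisolvent v xs -> smoother v l xs s2 = smoother v l' xs s2.
Proof.
move=> Lt_psd Lt'_psd xs_uni.
have smoother_mul_eq (y : 'cV_n) : smoother v l xs s2 *m y = smoother v l' xs s2 *m y.
  rewrite !smoother_pmean //; apply/colP => i; rewrite !mxE.
  by have [] := ll' xs_inj xs_uni (xs i) y s2_gt0.
apply/matrixP => i j.
have := congr1 (fun M : 'cV[R]_n => M i 0) (smoother_mul_eq (delta_mx j 0)).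
by rewrite -!colE !mxE.
Qed.

Lemma C_SURE_pred_equiv y : psd (Ltilde v l xs) -> psd (Ltilde v l' xs) ->
  unisolvent v xs -> C_SURE v l xs s2 y = C_SURE v l' xs s2 y.
Proof. by move=> Lt_psd Lt'_psd xs_uni; rewrite /C_SURE smoother_pred_equiv. Qed.

Lemma rem_idxE (i : 'I_n) (j : 'I_n.-1) : rem_idx i j = lift i j.
Proof. by apply: val_inj; rewrite /rem_idx val_insubd (ltn_ord (lift i j)). Qed.

Lemma rem_pts_inj (i : 'I_n) : injective (rem_pts xs i).
Proof. by move=> j k /xs_inj; rewrite !rem_idxE => /lift_inj. Qed.

Hypothesis rem_uni : forall i : 'I_n, unisolvent v (rem_pts xs i).

Lemma loo_pred_equiv y (i : 'I_n) :
  loo_mean v l xs s2 y i = loo_mean v l' xs s2 y i /\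
  loo_var v l xs s2 i = loo_var v l' xs s2 i.
Proof.
have [mean_eq var_eq] :=
  ll' (rem_pts_inj (i := i)) (rem_uni i) (xs i) (rem_obs y i) s2_gt0.
by rewrite /loo_mean /loo_var mean_eq var_eq.
Qed.

Lemma C_loo_mse_pred_equiv y : C_loo_mse v l xs s2 y = C_loo_mse v l' xs s2 y.
Proof.
by congr (_ * _); apply: eq_bigr => i _; have [-> _] := loo_pred_equiv y i.
Qed.

Lemma C_loo_nll_pred_equiv y : C_loo_nll v l xs s2 y = C_loo_nll v l' xs s2 y.
Proof.
by congr (_ * _); apply: eq_bigr => i _; have [-> ->] := loo_pred_equiv y i.
Qed.

End Criteria.

End SemiParametric.

Lemma crit_opt_eq (R : realType) (C C' : R -> R) g :
  (forall g, 0 < g -> C g = C' g) -> crit_opt C g -> crit_opt C' g.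
Proof.
move=> CC' [g_gt0 g_min]; split=> // g' g'_gt0.
by rewrite -!CC' //; apply: g_min.
Qed.

Theorem mainTheorem6 (R : realType) (Omega : Type) (m : nat)
  (v : 'I_m -> Omega -> R) (l l' : Omega -> Omega -> R) :
  SPM v l -> SPM v l' -> pred_equiv v l l' ->
  forall (n : nat) (xs : 'I_n -> Omega) (y : 'cV[R]_n) (s2 : R),
  injective xs -> unisolvent v xs -> 0 < s2 ->
  (* SURE: equal values for every gamma, same optima, equivalent selections *)
  (forall g : R, 0 < g ->
     C_SURE v (kscale g l) xs s2 y = C_SURE v (kscale g l') xs s2 y) /\
  (forall gs : R, crit_opt (fun g => C_SURE v (kscale g l) xs s2 y) gs ->
     crit_opt (fun g => C_SURE v (kscale g l') xs s2 y) gs /\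
     pred_equiv v (kscale gs l) (kscale gs l')) /\
  (* leave-one-out criteria (defined when every X without x_i is unisolvent) *)
  ((forall i : 'I_n, unisolvent v (rem_pts xs i)) ->
   (forall g : R, 0 < g ->
      C_loo_mse v (kscale g l) xs s2 y = C_loo_mse v (kscale g l') xs s2 y /\
      C_loo_nll v (kscale g l) xs s2 y = C_loo_nll v (kscale g l') xs s2 y) /\
   (forall gs : R, crit_opt (fun g => C_loo_mse v (kscale g l) xs s2 y) gs ->
      crit_opt (fun g => C_loo_mse v (kscale g l') xs s2 y) gs /\
      pred_equiv v (kscale gs l) (kscale gs l')) /\
   (forall gs : R, crit_opt (fun g => C_loo_nll v (kscale g l) xs s2 y) gs ->
      crit_opt (fun g => C_loo_nll v (kscale g l') xs s2 y) gs /\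
      pred_equiv v (kscale gs l) (kscale gs l'))).
Proof.
move=> [_ [_ l_psd]] [_ [_ l'_psd]] ll' n xs y s2 xs_inj xs_uni s2_gt0.
have pe g : 0 < g -> pred_equiv v (kscale g l) (kscale g l').
  exact: pred_equiv_kscale.
have select (C C' : R -> R) : (forall g, 0 < g -> C g = C' g) -> forall gs,
    crit_opt C gs -> crit_opt C' gs /\ pred_equiv v (kscale gs l) (kscale gs l').
  by move=> CC' gs gs_opt; split; [exact: crit_opt_eq gs_opt | exact/pe/gs_opt.1].
have sure g : 0 < g ->
    C_SURE v (kscale g l) xs s2 y = C_SURE v (kscale g l') xs s2 y.
  move=> g_gt0; apply: C_SURE_pred_equiv => //; first exact: pe.
    exact/psd_Ltilde_kscale/l_psd.
  exact/psd_Ltilde_kscale/l'_psd.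
split; first exact: sure.
split; first exact: select.
move=> rem_uni.
have loo g : 0 < g ->
    C_loo_mse v (kscale g l) xs s2 y = C_loo_mse v (kscale g l') xs s2 y /\
    C_loo_nll v (kscale g l) xs s2 y = C_loo_nll v (kscale g l') xs s2 y.
  move=> /pe ll'g; split.
    exact: C_loo_mse_pred_equiv ll'g xs_inj s2_gt0 rem_uni y.
  exact: C_loo_nll_pred_equiv ll'g xs_inj s2_gt0 rem_uni y.
split; first exact: loo.
by split; apply: select => g /loo[].
Qed.
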